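(* For every finite nonempty poset $P$, $h(P)-1\le e(P)\le d(P)$. Moreover, if $P$ has a smallest and a largest element, then $e(P)=d(P)$.
   Context: An injective map $f$ from a poset $P$ to a poset $Q$ is a weak embedding if $p\le q$ implies $f(p)\le f(q)$. $B_n$ is the Boolean lattice of all subsets of $\{1,\dots,n\}$ ordered by inclusion; its $k$-th level is the family of $k$-element subsets. $d(P)$ is the smallest integer $d$ such that $P$ weakly embeds into $B_d$. $e(P)$ is the largest integer $e$ such that for every $n$ the union of any $e$ consecutive levels of $B_n$ admits no weak embedding of $P$. $h(P)$ is the number of elements of a longest chain of $P$. *)

From mathcomp Require Import all_boot all_order.
Set Implicit Arguments. Unset Strict Implicit. Unset Printing Implicit Defensive.
Import Order.TTheory.
Local Open Scope order_scope.

Section Defs.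
Context {disp : Order.disp_t} (P : finPOrderType disp).

Definition weak_embedding_B (n : nat) (f : P -> {set 'I_n}) : Prop :=
  injective f /\ (forall p q : P, p <= q -> f p \subset f q).

Definition weakly_embeds_into (n : nat) (S : {set {set 'I_n}}) : Prop :=
  exists f : P -> {set 'I_n}, weak_embedding_B f /\ (forall p, f p \in S).

Definition consec_levels (n k e : nat) : {set {set 'I_n}} :=
  [set A : {set 'I_n} | (k <= #|A|)%N && (#|A| < k + e)%N].

Definition is_d (m : nat) : Prop :=
  weakly_embeds_into [set: {set 'I_m}] /\
  (forall d : nat, weakly_embeds_into [set: {set 'I_d}] -> (m <= d)%N).

(* For every n, no union of e consecutive levels of B_n admits a weak
   embedding of P (the levels k..k+e-1 must be levels of B_n, k+e-1 <= n). *)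
Definition no_embed_consec (e : nat) : Prop :=
  forall n k : nat, (k + e <= n.+1)%N -> ~ weakly_embeds_into (consec_levels n k e).

Definition is_e (m : nat) : Prop :=
  no_embed_consec m /\ (forall e : nat, no_embed_consec e -> (e <= m)%N).

Definition is_chain (C : {set P}) : bool :=
  [forall x in C, forall y in C, (x <= y) || (y <= x)].

Definition height : nat := \max_(C : {set P} | is_chain C) #|C|.

End Defs.

(* Restricting a weak embedding to a chain makes the set sizes strictly
   increasing, so a chain of h elements needs h distinct levels: h - 1 <= e.
   Conversely, B_d is itself the union of the d + 1 levels 0..d, so e <= d.
   If P has a least element b and a greatest element t, any weak embedding f
   into e consecutive levels yields p |-> f p \ f b, a weak embedding into the
   Boolean lattice on f t \ f b, which has fewer than e elements; hence d < e
   would contradict the maximality of e, and e = d. *)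

From mathcomp Require Import all_boot all_order.
From Stdlib Require Import ClassicalEpsilon.
Set Implicit Arguments. Unset Strict Implicit. Unset Printing Implicit Defensive.
Import Order.TTheory.

Section ClassicalExtrema.
Variable Q : nat -> Prop.

Let q n : bool := if excluded_middle_informative (Q n) then true else false.

Let qP n : reflect (Q n) (q n).
Proof. by rewrite /q; case: excluded_middle_informative => h; constructor. Qed.

Lemma ex_least_nat : (exists n, Q n) -> exists m, Q m /\ forall n, Q n -> (m <= n)%N.
Proof.
move=> [n Qn]; have exq : exists n, q n by exists n; apply/qP.
case: (ex_minnP exq) => m /qP Qm minm.
by exists m; split => // k /qP /minm.
Qed.

Lemma ex_greatest_nat (b : nat) : (exists n, Q n) -> (forall n, Q n -> (n <= b)%N) ->
  exists m, Q m /\ forall n, Q n -> (n <= m)%N.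
Proof.
move=> [n Qn] ubQ; have exq : exists n, q n by exists n; apply/qP.
have ubq : forall n, q n -> (n <= b)%N by move=> k /qP /ubQ.
case: (ex_maxnP exq ubq) => m /qP Qm maxm.
by exists m; split => // k /qP /maxm.
Qed.

End ClassicalExtrema.

Section WeakEmbeddings.
Context {disp : Order.disp_t} (P : finPOrderType disp).

Lemma weakly_embeds_into_card (T : finType) (f : P -> {set T}) (S : {set T}) :
  injective f -> (forall p q : P, (p <= q)%O -> f p \subset f q) ->
  (forall p, f p \subset S) -> weakly_embeds_into P [set: {set 'I_#|S|}].
Proof.
move=> f_inj f_mono fS.
pose g p := [set i : 'I_#|S| | enum_val i \in f p].
have g_sub p q : g p \subset g q -> f p \subset f q.
  move=> /subsetP gpq; apply/subsetP => x xp.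
  have Sx := subsetP (fS p) x xp.
  by have := gpq (enum_rank_in Sx x); rewrite !inE enum_rankK_in //; apply.
exists g; split; last by move=> p; rewrite inE.
split=> [p q Egpq | p q /f_mono/subsetP fpq].
  by apply: f_inj; apply/eqP; rewrite eqEsubset !g_sub // Egpq.
by apply/subsetP => i; rewrite !inE => /fpq.
Qed.

Lemma weakly_embeds_into_widen (a b : nat) : (a <= b)%N ->
  weakly_embeds_into P [set: {set 'I_a}] -> weakly_embeds_into P [set: {set 'I_b}].
Proof.
move=> le_ab [f [[f_inj f_mono] _]].
have widen_inj : injective (widen_ord le_ab) by move=> i j /(congr1 val) /= /val_inj.
exists (fun p => widen_ord le_ab @: f p); split; last by move=> p; rewrite inE.
split=> [p q /(imset_inj widen_inj) /f_inj // | p q /f_mono].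
exact: imsetS.
Qed.

Lemma weakly_embeds_into_downsets :
  weakly_embeds_into P [set: {set 'I_#|[set: P]|}].
Proof.
apply: (@weakly_embeds_into_card _ (fun p => [set q | (q <= p)%O]) [set: P]) => //.
- move=> p q /setP E; apply/le_anti.
  by have := E p; have := E q; rewrite !inE !lexx => -> <-.
- by move=> p q le_pq; apply/subsetP => x; rewrite !inE => /le_trans; apply.
Qed.

Lemma no_embed_consec0 : (0 < #|P|)%N -> no_embed_consec P 0.
Proof.
move=> /card_gt0P [p _] n k _ [f [_ fS]].
by have := fS p; rewrite inE addn0 => /andP [/leq_ltn_trans lt /lt]; rewrite ltnn.
Qed.

Lemma no_embed_consec_leq (e m : nat) : no_embed_consec P e ->
  weakly_embeds_into P [set: {set 'I_m}] -> (e <= m)%N.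
Proof.
move=> noe emb_m; rewrite leqNgt; apply/negP => lt_me.
have e_gt0 : (0 < e)%N by apply: leq_ltn_trans lt_me.
apply: (noe e.-1 0); first by rewrite add0n prednK.
have [f [f_emb _]] := weakly_embeds_into_widen (ltnSE (leq_trans lt_me (leqSpred e))) emb_m.
exists f; split=> // p; rewrite inE add0n /=.
by have := max_card (mem (f p)); rewrite card_ord => /leq_ltn_trans; apply; rewrite ltn_predL.
Qed.

Lemma chain_card_le_levels (C : {set P}) (n k e : nat) : is_chain C ->
  weakly_embeds_into P (consec_levels n k e) -> (#|C| <= e)%N.
Proof.
move=> C_chain [f [[f_inj f_mono] fS]].
have card_inj : {in C &, injective (fun c => #|f c|)}.
  move=> x y xC yC Exy.
  have /orP [/f_mono le_xy | /f_mono le_yx] : (x <= y)%O || (y <= x)%O.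
    by move/forallP: C_chain => /(_ x); rewrite xC => /forallP /(_ y); rewrite yC.
  - by apply/f_inj/eqP; rewrite eqEcard le_xy Exy /=.
  - by apply/esym/f_inj/eqP; rewrite eqEcard le_yx Exy /=.
have sizes_uniq : uniq [seq #|f c| | c <- enum C].
  by rewrite map_inj_in_uniq ?enum_uniq // => x y; rewrite !mem_enum; apply: card_inj.
rewrite cardE -(size_map (fun c => #|f c|)) -(size_iota k e).
apply: uniq_leq_size sizes_uniq _ => _ /mapP [c _ ->].
by rewrite mem_iota; have := fS c; rewrite inE.
Qed.

Lemma height_le_levels (n k e : nat) :
  weakly_embeds_into P (consec_levels n k e) -> (height P <= e)%N.
Proof.
move=> emb.
have chain0 : (0 < #|[pred C : {set P} | is_chain C]|)%N.
  by apply/card_gt0P; exists set0; apply/forallP => x; rewrite inE.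
have [C C_chain height_C] := eq_bigmax_cond (fun C : {set P} => #|C|) chain0.
rewrite [height P]height_C.
exact: chain_card_le_levels C_chain emb.
Qed.

Lemma no_embed_consec_height : (0 < height P)%N -> no_embed_consec P (height P).-1.
Proof.
by move=> h_gt0 n k _ /height_le_levels; rewrite leqNgt ltn_predL h_gt0.
Qed.

Lemma bounded_levels_embeds_Boolean (b t : P) :
  (forall p, (b <= p)%O /\ (p <= t)%O) -> forall n k e,
  weakly_embeds_into P (consec_levels n k e) ->
  exists2 m, (m < e)%N & weakly_embeds_into P [set: {set 'I_m}].
Proof.
move=> bt n k e [f [[f_inj f_mono] fS]].
have fb p : f b \subset f p by apply: f_mono; case: (bt p).
have ft p : f p \subset f t by apply: f_mono; case: (bt p).
exists #|f t :\: f b|.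
  rewrite cardsD (setIidPr (fb t)) ltn_subLR ?subset_leq_card //.
  have := fS b; have := fS t; rewrite !inE => /andP [_ lt_t] /andP [le_b _].
  by apply: leq_trans lt_t _; rewrite leq_add2r.
apply: (@weakly_embeds_into_card _ (fun p => f p :\: f b)).
- move=> p q /setP E; apply: f_inj; apply/setP => x.
  case xb: (x \in f b); first by rewrite (subsetP (fb p)) ?(subsetP (fb q)).
  by have := E x; rewrite !inE xb.
- by move=> p q /f_mono; apply: setSD.
- by move=> p; apply: setSD.
Qed.

End WeakEmbeddings.

Theorem mainTheorem3 (disp : Order.disp_t) (P : finPOrderType disp) :
  (0 < #|P|)%N ->
  exists dP eP : nat,
    is_d P dP /\ is_e P eP /\
    (height P - 1 <= eP)%N /\ (eP <= dP)%N /\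
    ((exists bot top : P, forall p : P, (bot <= p)%O /\ (p <= top)%O) -> eP = dP).
Proof.
move=> P_gt0.
have [dP [emb_dP min_dP]] := ex_least_nat
  (Q := fun d => weakly_embeds_into P [set: {set 'I_d}])
  (ex_intro _ #|[set: P]| (weakly_embeds_into_downsets P)).
have e_le_d e : no_embed_consec P e -> (e <= dP)%N.
  by move=> noe; apply: no_embed_consec_leq noe emb_dP.
have [eP [no_eP max_eP]] :=
  ex_greatest_nat (ex_intro _ 0 (no_embed_consec0 P_gt0)) e_le_d.
exists dP, eP; do ![split] => //.
- have [-> // | h_gt0] := posnP (height P).
  by rewrite subn1; apply/max_eP/no_embed_consec_height.
- exact: e_le_d.
- move=> [b [t bt]]; apply/eqP; rewrite eqn_leq e_le_d //=.
  apply: max_eP => n k _ /(bounded_levels_embeds_Boolean bt) [m lt_md /min_dP le_dm].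
  by have := leq_ltn_trans le_dm lt_md; rewrite ltnn.
Qed.
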